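(* There exists a (computable) constant $\delta_0>0$ such that for every diagonal physical $Q=\operatorname{diag}(\lambda_1,\lambda_2,\lambda_3)$ with $-\tfrac13<\lambda_1\le\lambda_2\le\lambda_3<\tfrac23$, $\lambda_1+\lambda_2+\lambda_3=0$ and $\lambda_2+\tfrac13<\delta_0$, setting $\nu_1=-(2\mu_1+\mu_2)$, $\nu_2=-(\mu_1+2\mu_2)$ and $A(\phi)=\nu_1\cos^2\phi+\nu_2\sin^2\phi$, one has $$\frac1\pi\int_0^{2\pi}\frac{\mathrm d\phi}{A(\phi)}\le\int_{\mathbb S^2}e^{-\nu_1x^2-\nu_2y^2}\,\mathrm dS\le\frac{\pi^2}{4}\int_0^{2\pi}\frac{\mathrm d\phi}{A(\phi)},$$ $$\frac4{\pi^3}\int_0^{2\pi}\frac{\cos^2\phi}{A^2(\phi)}\,\mathrm d\phi\le\int_{\mathbb S^2}x^2e^{-\nu_1x^2-\nu_2y^2}\,\mathrm dS\le\frac{\pi^4}{16}\int_0^{2\pi}\frac{\cos^2\phi}{A^2(\phi)}\,\mathrm d\phi,$$ $$\frac4{\pi^3}\int_0^{2\pi}\frac{\sin^2\phi}{A^2(\phi)}\,\mathrm d\phi\le\int_{\mathbb S^2}y^2e^{-\nu_1x^2-\nu_2y^2}\,\mathrm dS\le\frac{\pi^4}{16}\int_0^{2\pi}\frac{\sin^2\phi}{A^2(\phi)}\,\mathrm d\phi.$$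
   Context: Points of the unit sphere $\mathbb S^2$ are written $(x,y,z)$, and $\mathrm dS$ is surface measure. For a physical $Q$ (symmetric traceless with all eigenvalues in $(-\tfrac13,\tfrac23)$) the Ball–Majumdar potential is $f(Q)=\inf\int_{\mathbb S^2}\rho\ln\rho\,\mathrm dS$ over even probability densities $\rho$ with $\int(\mathbf n\otimes\mathbf n-\tfrac13I_3)\rho\,\mathrm dS=Q$. For diagonal physical $Q=\operatorname{diag}(\lambda_1,\lambda_2,\lambda_3)$ this infimum is attained by $\rho_Q(x,y,z)=\exp(\mu_1x^2+\mu_2y^2+\mu_3z^2)/Z$, $Z=\int_{\mathbb S^2}\exp(\mu_1x^2+\mu_2y^2+\mu_3z^2)\,\mathrm dS$, where the Lagrange multipliers $\mu_1,\mu_2,\mu_3\in\mathbb R$ satisfy $\mu_1+\mu_2+\mu_3=0$ and $\int x^2\rho_Q\,\mathrm dS=\lambda_1+\tfrac13$, $\int y^2\rho_Q\,\mathrm dS=\lambda_2+\tfrac13$, $\int z^2\rho_Q\,\mathrm dS=\lambda_3+\tfrac13$. *)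

From Stdlib Require Import Reals.
From Coquelicot Require Import Coquelicot.
Open Scope R_scope.

(* Surface integral over the unit sphere S^2 with respect to surface measure,
   via the standard spherical parametrisation
   (x,y,z) = (sin t cos p, sin t sin p, cos t), dS = sin t dp dt,
   t in [0,pi], p in [0,2pi]. *)
Definition sphere_int (f : R -> R -> R -> R) : R :=
  RInt (fun t =>
    RInt (fun p => f (sin t * cos p) (sin t * sin p) (cos t) * sin t) 0 (2 * PI))
  0 PI.

Definition bm_weight (mu1 mu2 mu3 : R) (x y z : R) : R :=
  exp (mu1 * x ^ 2 + mu2 * y ^ 2 + mu3 * z ^ 2).

Definition bm_Z (mu1 mu2 mu3 : R) : R :=
  sphere_int (bm_weight mu1 mu2 mu3).

(* (mu1,mu2,mu3) are the Lagrange multipliers of the Ball--Majumdar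
   minimiser rho_Q for Q = diag(l1,l2,l3). *)
Definition bm_multipliers (l1 l2 l3 mu1 mu2 mu3 : R) : Prop :=
  mu1 + mu2 + mu3 = 0 /\
  sphere_int (fun x y z => x ^ 2 * bm_weight mu1 mu2 mu3 x y z) / bm_Z mu1 mu2 mu3
    = l1 + 1/3 /\
  sphere_int (fun x y z => y ^ 2 * bm_weight mu1 mu2 mu3 x y z) / bm_Z mu1 mu2 mu3
    = l2 + 1/3 /\
  sphere_int (fun x y z => z ^ 2 * bm_weight mu1 mu2 mu3 x y z) / bm_Z mu1 mu2 mu3
    = l3 + 1/3.

From Stdlib Require Import Reals Lra Psatz.
From Coquelicot Require Import Coquelicot.
Open Scope R_scope.

(* In polar coordinates [(x, y, z) = (sin t cos p, sin t sin p, cos t)] the weight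
   [exp (- nu1 x ^ 2 - nu2 y ^ 2)] is [exp (- A p sin t ^ 2)], so for fixed [p] the colatitude
   integrals are [Ksin1 (A p)] and [Ksin3 (A p)].  Substituting [c = cos t] and squeezing
   [1 - c ^ 2] between [1 - c] and [2 (1 - c)] on [[0, 1]] turns these into explicit exponential
   integrals, which are within constant factors of [1 / a] and [1 / a ^ 2] once [a >= 4];
   integrating over [p] gives the six bounds.

   It remains to see that [nu1, nu2 >= 4].  On the sphere [z ^ 2 = 1 - x ^ 2 - y ^ 2], so [mu3]
   only contributes a constant factor and the constraints say [Ix / I0 = l1 + 1/3] and
   [Iy / I0 = l2 + 1/3], both below [1/11].  Integrating by parts once in [t] and once in [p]
   rewrites [I0] as the integral of [sin p ^ 2 sin t ^ 3] times the weight times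
   [3 + 2 nu2 cos t ^ 2 - 2 (nu1 - nu2) cos p ^ 2 sin t ^ 2], so [I0 <= (3 + 2 max nu2 0) Iy] when
   [nu2 <= nu1]; hence the smaller multiplier exceeds [4].  The case [nu1 <= nu2] follows from the
   quarter turn [p -> p + PI / 2], which exchanges [x] and [y]. *)

Definition continuous2 (f : R -> R -> R) : Prop := forall x y, continuity_2d_pt f x y.

Lemma continuity_2d_pt_pow (g : R -> R -> R) n x y :
  continuity_2d_pt g x y -> continuity_2d_pt (fun u v => g u v ^ n) x y.
Proof.
  apply (continuity_1d_2d_pt_comp (fun r => r ^ n)).
  apply derivable_continuous_pt, derivable_pt_pow.
Qed.

Lemma continuity_2d_pt_exp (g : R -> R -> R) x y :
  continuity_2d_pt g x y -> continuity_2d_pt (fun u v => exp (g u v)) x y.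
Proof.
  apply (continuity_1d_2d_pt_comp exp).
  apply derivable_continuous_pt, derivable_exp.
Qed.

Lemma continuity_2d_pt_sin (g : R -> R -> R) x y :
  continuity_2d_pt g x y -> continuity_2d_pt (fun u v => sin (g u v)) x y.
Proof. apply (continuity_1d_2d_pt_comp sin), continuity_sin. Qed.

Lemma continuity_2d_pt_cos (g : R -> R -> R) x y :
  continuity_2d_pt g x y -> continuity_2d_pt (fun u v => cos (g u v)) x y.
Proof. apply (continuity_1d_2d_pt_comp cos), continuity_cos. Qed.

Ltac continuity2 := intros ? ?; repeat first
  [ apply continuity_2d_pt_plus | apply continuity_2d_pt_minus
  | apply continuity_2d_pt_mult | apply continuity_2d_pt_opp
  | apply continuity_2d_pt_pow | apply continuity_2d_pt_exp
  | apply continuity_2d_pt_sin | apply continuity_2d_pt_cos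
  | apply continuity_2d_pt_id1 | apply continuity_2d_pt_id2
  | apply continuity_2d_pt_const ].

(* Equations between [RInt] terms live in Coquelicot's carrier type; [ring] needs them at [R]. *)
Ltac ring_R := match goal with |- ?x = ?y => change (@eq R x y) end; ring.

Ltac continuity1 :=
  intros; apply (ex_derive_continuous (V := R_NormedModule)); auto_derive; try exact I.

Lemma continuous2_fst f : continuous2 f -> forall y x, continuous (fun u => f u y) x.
Proof.
  intros Hf y x. apply continuity_pt_filterlim, continuity_pt_locally.
  intro eps. destruct (Hf x y eps) as [d Hd]. exists d. intros u Hu.
  apply Hd; [exact Hu|]. rewrite Rminus_eq_0, Rabs_R0. apply cond_pos.
Qed.

Lemma continuous2_swap f : continuous2 f -> continuous2 (fun u v => f v u).
Proof.
  intros Hf x y eps. destruct (Hf y x eps) as [d Hd]. exists d.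
  intros u v Hu Hv. now apply Hd.
Qed.

Lemma continuous2_snd f : continuous2 f -> forall x y, continuous (fun v => f x v) y.
Proof. intros Hf x. apply (continuous2_fst (fun u v => f v u)), continuous2_swap, Hf. Qed.

Lemma ex_RInt_continuous_R (f : R -> R) a b : (forall x, continuous f x) -> ex_RInt f a b.
Proof. intro Hf. apply (ex_RInt_continuous (V := R_CompleteNormedModule)). intros; apply Hf. Qed.

Lemma RInt_const_R (c a b : R) : RInt (fun _ => c) a b = (b - a) * c :> R.
Proof. rewrite RInt_const. reflexivity. Qed.

Lemma RInt_scal_R (f : R -> R) k a b : ex_RInt f a b ->
  RInt (fun x => k * f x) a b = k * RInt f a b :> R.
Proof. apply (RInt_scal (V := R_CompleteNormedModule)). Qed.

Lemma continuous_RInt_param_le f c d : continuous2 f -> c <= d ->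
  forall x, continuous (fun u => RInt (fun v => f u v) c d) x.
Proof.
  intros Hf Hcd x. apply continuity_pt_filterlim, continuity_pt_locally. intro eps.
  set (e := eps / (2 * (d - c + 1))).
  assert (He : 0 < e) by (apply Rdiv_lt_0_compat; [apply cond_pos | lra]).
  destruct (uniform_continuity_2d f (x - 1) (x + 1) c d) with (mkposreal e He)
    as [delta Hdelta]; [intros; apply Hf|].
  assert (Hm : 0 < Rmin delta 1) by (apply Rmin_pos; [apply cond_pos | lra]).
  exists (mkposreal _ Hm). intros u Hu. simpl in Hu.
  assert (Hux : Rabs (u - x) < delta) by (eapply Rlt_le_trans; [exact Hu | apply Rmin_l]).
  assert (Hu1 : Rabs (u - x) < 1) by (eapply Rlt_le_trans; [exact Hu | apply Rmin_r]).
  apply Rabs_lt_between in Hu1.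
  assert (Hex : forall w, ex_RInt (fun v => f w v) c d)
    by (intro w; apply ex_RInt_continuous_R, continuous2_snd, Hf).
  rewrite <- (RInt_minus (fun v => f u v) (fun v => f x v)) by auto.
  eapply Rle_lt_trans.
  - apply (abs_RInt_le_const _ c d e); [exact Hcd | |].
    { now apply (ex_RInt_minus (fun v => f u v) (fun v => f x v)). }
    intros t Ht. apply Rlt_le, (Hdelta x t u t); try lra.
    rewrite Rminus_eq_0, Rabs_R0. apply cond_pos.
  - unfold e. destruct eps as [ep Hep]; simpl.
    apply Rmult_lt_reg_r with (2 * (d - c + 1)); [lra|].
    field_simplify; nra.
Qed.

Lemma continuous_RInt_param f c d : continuous2 f ->
  forall x, continuous (fun u => RInt (fun v => f u v) c d) x.
Proof.
  intros Hf x. destruct (Rle_dec c d) as [Hcd|Hcd].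
  - now apply continuous_RInt_param_le.
  - apply (continuous_ext (fun u => opp (RInt (fun v => f u v) d c))).
    + intro u. rewrite opp_RInt_swap; [reflexivity|].
      apply ex_RInt_continuous_R, continuous2_snd, Hf.
    + apply (continuous_opp (fun u => RInt (fun v => f u v) d c)).
      apply continuous_RInt_param_le; [exact Hf | lra].
Qed.

Lemma is_derive_RInt_upper (h : R -> R) a z : (forall w, continuous h w) ->
  is_derive (fun z => RInt h a z) z (h z).
Proof.
  intro Hh. apply (is_derive_RInt (V := R_NormedModule) h _ a z); [|apply Hh].
  apply filter_forall. intro w. apply (RInt_correct (V := R_CompleteNormedModule)).
  now apply ex_RInt_continuous_R.
Qed.

Lemma is_derive_RInt_RInt_upper f a c d z : continuous2 f ->
  is_derive (fun z => RInt (fun y => RInt (fun x => f x y) a z) c d) z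
    (RInt (fun y => f z y) c d).
Proof.
  intro Hf.
  assert (Hd : forall y u, is_derive (fun z => RInt (fun x => f x y) a z) u (f u y))
    by (intros y u; apply (is_derive_RInt_upper (fun x => f x y)), continuous2_fst, Hf).
  rewrite (RInt_ext (fun y => f z y)
             (fun y => Derive (fun u => RInt (fun x => f x y) a u) z))
    by (intros y _; symmetry; apply is_derive_unique, Hd).
  apply (is_derive_RInt_param (fun z y => RInt (fun x => f x y) a z)).
  - apply filter_forall. intros w y _. eexists. apply Hd.
  - intros y _. apply (continuity_2d_pt_ext f); [|apply Hf].
    intros u v. symmetry. apply is_derive_unique, Hd.
  - apply filter_forall. intro w. apply ex_RInt_continuous_R.
    apply (continuous_RInt_param (fun y x => f x y)), continuous2_swap, Hf.
Qed.

(* Both sides, as functions of the upper bound [b], have the same derivative and vanish at [a]. *)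
Lemma RInt_RInt_swap f a b c d : continuous2 f ->
  RInt (fun x => RInt (fun y => f x y) c d) a b =
  RInt (fun y => RInt (fun x => f x y) a b) c d.
Proof.
  intro Hf.
  set (D := fun z => RInt (fun x => RInt (fun y => f x y) c d) a z
                   - RInt (fun y => RInt (fun x => f x y) a z) c d).
  assert (HD : is_RInt (fun _ => 0) a b (minus (D b) (D a))).
  { apply (is_RInt_derive (V := R_CompleteNormedModule) D); [|intros; apply continuous_const].
    intros z _. unfold D. rewrite <- (Rminus_diag (RInt (fun y => f z y) c d)).
    apply (is_derive_minus (V := R_NormedModule)).
    - apply (is_derive_RInt_upper (fun x => RInt (fun y => f x y) c d)).
      apply continuous_RInt_param, Hf.
    - now apply is_derive_RInt_RInt_upper. }
  apply (is_RInt_unique (V := R_CompleteNormedModule)) in HD.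
  rewrite RInt_const_R in HD.
  assert (Ha : D a = 0).
  { unfold D. rewrite RInt_point, (RInt_ext _ (fun _ => 0)), RInt_const_R
      by (intros; rewrite RInt_point; reflexivity).
    unfold zero; simpl; ring. }
  unfold minus, plus, opp in HD; simpl in HD. unfold D in *. lra.
Qed.

Lemma exp_le_exp x y : x <= y -> exp x <= exp y.
Proof. intros [Hxy|Hxy]; [left; now apply exp_increasing | subst; apply Rle_refl]. Qed.

Lemma sin2_cos2_pow x : sin x ^ 2 + cos x ^ 2 = 1.
Proof. rewrite <- (sin2_cos2 x). unfold Rsqr. ring. Qed.

Lemma RInt_antiderivative (g G : R -> R) a b : (forall x, continuous g x) ->
  (forall x, is_derive G x (g x)) -> RInt g a b = G b - G a :> R.
Proof.
  intros Hg HG. apply (is_RInt_unique (V := R_CompleteNormedModule)).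
  apply (is_RInt_derive (V := R_CompleteNormedModule)); intros; [apply HG | apply Hg].
Qed.

Lemma RInt_sin_comp_cos (g : R -> R) : (forall x, continuous g x) ->
  RInt (fun t => sin t * g (cos t)) 0 PI = RInt g (-1) 1.
Proof.
  intro Hg. apply (is_RInt_unique (V := R_CompleteNormedModule)).
  assert (Hex : ex_RInt g 1 (-1)) by (apply ex_RInt_continuous_R, Hg).
  rewrite <- (opp_RInt_swap g _ _ Hex).
  apply (is_RInt_ext (fun t => opp (scal (- sin t) (g (cos t))))).
  { intros t _. change (- (- sin t * g (cos t)) = sin t * g (cos t)). ring. }
  apply (is_RInt_opp (V := R_CompleteNormedModule)).
  pose proof (is_RInt_comp (V := R_CompleteNormedModule) g cos (fun t => - sin t) 0 PI)
    as Hsub.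
  rewrite cos_0, cos_PI in Hsub.
  apply Hsub; intros t _; [apply Hg|].
  split; [apply is_derive_cos | continuity1].
Qed.

Lemma RInt_even (g : R -> R) b : (forall x, continuous g x) -> (forall x, g (- x) = g x) ->
  RInt g (- b) b = 2 * RInt g 0 b.
Proof.
  intros Hg Heven.
  assert (Hex : forall u v, ex_RInt g u v) by (intros; apply ex_RInt_continuous_R, Hg).
  assert (Hrefl : RInt g (- b) 0 = RInt g 0 b).
  { rewrite <- (opp_RInt_swap (V := R_CompleteNormedModule) g _ _ (Hex _ _)).
    symmetry. apply (is_RInt_unique (V := R_CompleteNormedModule)).
    apply (is_RInt_ext (fun y => opp (opp (g (- y))))).
    { intros y _. rewrite opp_opp. apply Heven. }
    apply (is_RInt_opp (V := R_CompleteNormedModule)).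
    apply (is_RInt_comp_opp (V := R_CompleteNormedModule)).
    rewrite Ropp_0. apply (RInt_correct (V := R_CompleteNormedModule)), Hex. }
  rewrite <- (RInt_Chasles (V := R_CompleteNormedModule) g (- b) 0 b (Hex _ _) (Hex _ _)).
  rewrite Hrefl. change (RInt g 0 b + RInt g 0 b = 2 * RInt g 0 b). ring.
Qed.

Lemma RInt_sin_comp_sin2 (h : R -> R) : (forall x, continuous h x) ->
  RInt (fun t => sin t * h (sin t ^ 2)) 0 PI = 2 * RInt (fun c => h (1 - c ^ 2)) 0 1.
Proof.
  intro Hh.
  assert (Hg : forall x, continuous (fun c => h (1 - c ^ 2)) x).
  { intro x. apply (continuous_comp (fun c => 1 - c ^ 2) h); [continuity1 | apply Hh]. }
  rewrite (RInt_ext _ (fun t => sin t * h (1 - cos t ^ 2)))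
    by (intros t _; rewrite <- (sin2_cos2_pow t); f_equal; f_equal; ring).
  rewrite (RInt_sin_comp_cos (fun c => h (1 - c ^ 2))) by exact Hg.
  rewrite <- (RInt_even _ 1); [reflexivity | exact Hg |].
  intro x. f_equal. ring.
Qed.

Lemma RInt_le_continuous (f g : R -> R) a b : a <= b ->
  (forall x, continuous f x) -> (forall x, continuous g x) ->
  (forall x, a <= x <= b -> f x <= g x) -> RInt f a b <= RInt g a b.
Proof.
  intros Hab Hf Hg Hfg. apply RInt_le; auto using ex_RInt_continuous_R.
  intros x Hx. apply Hfg. lra.
Qed.

Lemma RInt_exp_affine k : 0 < k ->
  RInt (fun c => exp (- k * (1 - c))) 0 1 = (1 - exp (- k)) / k :> R.
Proof.
  intro Hk.
  rewrite (RInt_antiderivative _ (fun c => exp (- k * (1 - c)) / k)).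
  - replace (- k * (1 - 1)) with 0 by ring. replace (- k * (1 - 0)) with (- k) by ring.
    rewrite exp_0. field. lra.
  - continuity1.
  - intro c. auto_derive; [exact I | unfold Rminus; field; lra].
Qed.

Lemma RInt_affine_exp_affine k : 0 < k ->
  RInt (fun c => (1 - c) * exp (- k * (1 - c))) 0 1 = (1 - (1 + k) * exp (- k)) / k ^ 2 :> R.
Proof.
  intro Hk.
  rewrite (RInt_antiderivative _ (fun c => ((1 - c) / k + 1 / k ^ 2) * exp (- k * (1 - c)))).
  - replace (- k * (1 - 1)) with 0 by ring. replace (- k * (1 - 0)) with (- k) by ring.
    rewrite exp_0. field. lra.
  - continuity1.
  - intro c. auto_derive; [exact I | unfold Rminus; field; lra].
Qed.

Definition Ksin1 (a : R) : R := RInt (fun t => sin t * exp (- a * sin t ^ 2)) 0 PI.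
Definition Ksin3 (a : R) : R := RInt (fun t => sin t ^ 3 * exp (- a * sin t ^ 2)) 0 PI.

Lemma one_minus_sqr_bounds c : 0 <= c <= 1 -> 1 - c <= 1 - c ^ 2 <= 2 * (1 - c).
Proof. intros. split; nra. Qed.

Lemma Ksin1_bounds a : 0 < a -> (1 - exp (- (2 * a))) / a <= Ksin1 a <= 2 / a.
Proof.
  intro Ha. unfold Ksin1.
  rewrite (RInt_sin_comp_sin2 (fun s => exp (- a * s))) by continuity1.
  pose proof (RInt_exp_affine (2 * a)) as Hlo. pose proof (RInt_exp_affine a) as Hup.
  pose proof (exp_pos (- a)).
  split.
  - replace ((1 - exp (- (2 * a))) / a) with (2 * ((1 - exp (- (2 * a))) / (2 * a)))
      by (field; lra).
    rewrite <- Hlo by lra. apply Rmult_le_compat_l; [lra|].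
    apply RInt_le_continuous; [lra | continuity1 | continuity1 |].
    intros c Hc. apply exp_le_exp. pose proof (one_minus_sqr_bounds c Hc). nra.
  - apply Rle_trans with (2 * ((1 - exp (- a)) / a)).
    + rewrite <- Hup by lra. apply Rmult_le_compat_l; [lra|].
      apply RInt_le_continuous; [lra | continuity1 | continuity1 |].
      intros c Hc. apply exp_le_exp. pose proof (one_minus_sqr_bounds c Hc). nra.
    + unfold Rdiv. pose proof (Rinv_0_lt_compat a Ha). nra.
Qed.

Lemma Ksin3_bounds a : 0 < a ->
  (1 - (1 + 2 * a) * exp (- (2 * a))) / (2 * a ^ 2) <= Ksin3 a <= 4 / a ^ 2.
Proof.
  intro Ha. unfold Ksin3.
  rewrite (RInt_ext _ (fun t => sin t * (sin t ^ 2 * exp (- a * sin t ^ 2))))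
    by (intros; ring_R).
  rewrite (RInt_sin_comp_sin2 (fun s => s * exp (- a * s))) by continuity1.
  pose proof (RInt_affine_exp_affine (2 * a)) as Hlo.
  pose proof (RInt_affine_exp_affine a) as Hup.
  pose proof (exp_pos (- a)).
  split.
  - replace ((1 - (1 + 2 * a) * exp (- (2 * a))) / (2 * a ^ 2))
      with (2 * ((1 - (1 + 2 * a) * exp (- (2 * a))) / (2 * a) ^ 2)) by (field; lra).
    rewrite <- Hlo by lra. apply Rmult_le_compat_l; [lra|].
    apply RInt_le_continuous; [lra | continuity1 | continuity1 |].
    intros c Hc. pose proof (one_minus_sqr_bounds c Hc).
    apply Rmult_le_compat; [lra | left; apply exp_pos | lra | apply exp_le_exp; nra].
  - apply Rle_trans with (2 * (2 * ((1 - (1 + a) * exp (- a)) / a ^ 2))).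
    + rewrite <- Hup, <- (RInt_scal_R (fun c => (1 - c) * exp (- a * (1 - c))) 2)
        by (lra || apply ex_RInt_continuous_R; continuity1).
      apply Rmult_le_compat_l; [lra|].
      apply RInt_le_continuous; [lra | continuity1 | continuity1 |].
      intros c Hc. pose proof (one_minus_sqr_bounds c Hc). rewrite <- Rmult_assoc.
      apply Rmult_le_compat; [lra | left; apply exp_pos | lra | apply exp_le_exp; nra].
    + unfold Rdiv. pose proof (Rinv_0_lt_compat (a ^ 2) ltac:(nra)).
      assert (0 <= (1 + a) * exp (- a)) by (apply Rmult_le_pos; lra). nra.
Qed.

Lemma PI_gt_3 : 3 < PI.
Proof. pose proof PI2_3_2. lra. Qed.

Lemma exp_neg_decay a : 4 <= a -> (1 + 2 * a) * exp (- (2 * a)) <= 9 / 25.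
Proof.
  intro Ha.
  assert (Hsq : (1 + a) ^ 2 <= exp (2 * a)).
  { replace (2 * a) with (a + a) by ring. rewrite exp_plus.
    pose proof (exp_ineq1_le a). nra. }
  rewrite exp_Ropp. pose proof (exp_pos (2 * a)).
  apply Rmult_le_reg_r with (exp (2 * a)); [lra|].
  rewrite Rmult_assoc, Rinv_l by lra. nra.
Qed.

Lemma Ksin1_bounds_large a : 4 <= a -> 1 / PI * / a <= Ksin1 a <= PI ^ 2 / 4 * / a.
Proof.
  intro Ha. destruct (Ksin1_bounds a ltac:(lra)) as [Hlo Hup].
  pose proof PI_gt_3. pose proof (exp_neg_decay a Ha). pose proof (Rinv_0_lt_compat a ltac:(lra)).
  unfold Rdiv in *. split.
  - eapply Rle_trans; [|exact Hlo].
    apply Rmult_le_compat_r; [lra|].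
    assert (Hpi : / PI < / 3) by (apply Rinv_lt_contravar; lra).
    pose proof (exp_pos (- (2 * a))). nra.
  - eapply Rle_trans; [exact Hup|]. apply Rmult_le_compat_r; nra.
Qed.

Lemma Ksin3_bounds_large a : 4 <= a ->
  4 / PI ^ 3 * / a ^ 2 <= Ksin3 a <= PI ^ 4 / 16 * / a ^ 2.
Proof.
  intro Ha. destruct (Ksin3_bounds a ltac:(lra)) as [Hlo Hup].
  pose proof PI_gt_3. pose proof (exp_neg_decay a Ha).
  pose proof (Rinv_0_lt_compat (a ^ 2) ltac:(nra)).
  assert (Hpi3 : 27 < PI ^ 3) by (simpl; nra).
  replace ((1 - (1 + 2 * a) * exp (- (2 * a))) / (2 * a ^ 2))
    with ((1 - (1 + 2 * a) * exp (- (2 * a))) / 2 * / a ^ 2) in Hlo by (field; lra).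
  unfold Rdiv in *. split.
  - eapply Rle_trans; [|exact Hlo].
    apply Rmult_le_compat_r; [lra|].
    assert (/ PI ^ 3 < / 27) by (apply Rinv_lt_contravar; lra). nra.
  - eapply Rle_trans; [exact Hup|]. apply Rmult_le_compat_r; [lra|].
    assert (81 < PI ^ 4) by (replace (PI ^ 4) with (PI ^ 2 * PI ^ 2) by ring; simpl in *; nra).
    lra.
Qed.

Lemma RInt_translate (g : R -> R) a b s : (forall x, continuous g x) ->
  RInt (fun x => g (x + s)) a b = RInt g (a + s) (b + s).
Proof.
  intro Hg. apply (is_RInt_unique (V := R_CompleteNormedModule)).
  apply (is_RInt_ext (fun y => scal 1 (g (1 * y + s)))).
  { intros y _. change (1 * g (1 * y + s) = g (y + s)). rewrite !Rmult_1_l. reflexivity. }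
  apply (is_RInt_comp_lin (V := R_CompleteNormedModule)).
  rewrite !Rmult_1_l. apply (RInt_correct (V := R_CompleteNormedModule)).
  now apply ex_RInt_continuous_R.
Qed.

(* The part of [s, T + s] beyond [T] is a translate of [0, s]. *)
Lemma RInt_periodic_shift (g : R -> R) T s : (forall x, continuous g x) ->
  (forall x, g (x + T) = g x) -> RInt (fun x => g (x + s)) 0 T = RInt g 0 T.
Proof.
  intros Hg Hper.
  assert (Hex : forall u v, ex_RInt g u v) by (intros; now apply ex_RInt_continuous_R).
  rewrite RInt_translate, Rplus_0_l by exact Hg.
  rewrite <- (RInt_Chasles (V := R_CompleteNormedModule) g s T (T + s)) by apply Hex.
  rewrite <- (RInt_Chasles (V := R_CompleteNormedModule) g 0 s T) by apply Hex.
  replace (RInt g T (T + s)) with (RInt g 0 s).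
  - change (RInt g s T + RInt g 0 s = RInt g 0 s + RInt g s T :> R). ring.
  - rewrite <- (Rplus_0_l T) at 1. rewrite (Rplus_comm T s), <- RInt_translate by exact Hg.
    apply RInt_ext. intros x _. symmetry. apply Hper.
Qed.

Definition RInt_angles (f : R -> R -> R) : R :=
  RInt (fun p => RInt (fun t => f t p) 0 PI) 0 (2 * PI).

Lemma ex_RInt_angles_inner f : continuous2 f -> forall p a b, ex_RInt (fun t => f t p) a b.
Proof. intros Hf p a b. apply ex_RInt_continuous_R. intro. now apply continuous2_fst. Qed.

Lemma continuous_RInt_angles_inner f : continuous2 f ->
  forall p, continuous (fun p => RInt (fun t => f t p) 0 PI) p.
Proof. intro Hf. apply (continuous_RInt_param (fun p t => f t p)), continuous2_swap, Hf. Qed.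

Lemma ex_RInt_angles_outer f : continuous2 f ->
  forall a b, ex_RInt (fun p => RInt (fun t => f t p) 0 PI) a b.
Proof. intros Hf a b. now apply ex_RInt_continuous_R, continuous_RInt_angles_inner. Qed.

Lemma RInt_angles_ext f g : (forall t p, 0 <= t <= PI -> f t p = g t p) ->
  RInt_angles f = RInt_angles g.
Proof.
  intro Hfg. pose proof PI_RGT_0. unfold RInt_angles.
  apply RInt_ext. intros p _. apply RInt_ext. intros t Ht.
  rewrite Rmin_left, Rmax_right in Ht by lra. apply Hfg. lra.
Qed.

Lemma RInt_angles_plus f g : continuous2 f -> continuous2 g ->
  RInt_angles (fun t p => f t p + g t p) = RInt_angles f + RInt_angles g.
Proof.
  intros Hf Hg. unfold RInt_angles.
  rewrite (RInt_ext _ (fun p => RInt (fun t => f t p) 0 PI + RInt (fun t => g t p) 0 PI)).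
  - apply (RInt_plus (V := R_CompleteNormedModule)); now apply ex_RInt_angles_outer.
  - intros p _. apply (RInt_plus (V := R_CompleteNormedModule) (fun t => f t p) (fun t => g t p));
      now apply ex_RInt_angles_inner.
Qed.

Lemma RInt_angles_scal k f : continuous2 f ->
  RInt_angles (fun t p => k * f t p) = k * RInt_angles f.
Proof.
  intro Hf. unfold RInt_angles.
  rewrite (RInt_ext _ (fun p => k * RInt (fun t => f t p) 0 PI)).
  - apply RInt_scal_R. now apply ex_RInt_angles_outer.
  - intros p _. apply (RInt_scal_R (fun t => f t p)). now apply ex_RInt_angles_inner.
Qed.

Lemma RInt_angles_le f g : continuous2 f -> continuous2 g ->
  (forall t p, 0 <= t <= PI -> f t p <= g t p) -> RInt_angles f <= RInt_angles g.
Proof.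
  intros Hf Hg Hfg. pose proof PI_RGT_0. unfold RInt_angles.
  apply RInt_le_continuous; [lra | now apply continuous_RInt_angles_inner
                                 | now apply continuous_RInt_angles_inner |].
  intros p _.
  apply RInt_le_continuous; [lra | now apply continuous2_fst | now apply continuous2_fst |].
  intros t Ht. now apply Hfg.
Qed.

Lemma RInt_angles_inner_zero f : (forall p, RInt (fun t => f t p) 0 PI = 0) ->
  RInt_angles f = 0.
Proof.
  intro Hf. unfold RInt_angles.
  rewrite (RInt_ext _ (fun _ => 0)), RInt_const_R by (intros; apply Hf). ring.
Qed.

Lemma RInt_angles_outer_zero f : continuous2 f ->
  (forall t, RInt (fun p => f t p) 0 (2 * PI) = 0) -> RInt_angles f = 0.
Proof.
  intros Hf Hout. unfold RInt_angles. rewrite <- RInt_RInt_swap by exact Hf.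
  rewrite (RInt_ext _ (fun _ => 0)), RInt_const_R by (intros; apply Hout). ring.
Qed.

Lemma RInt_angles_shift f s : continuous2 f -> (forall t p, f t (p + 2 * PI) = f t p) ->
  RInt_angles (fun t p => f t (p + s)) = RInt_angles f.
Proof.
  intros Hf Hper. unfold RInt_angles.
  apply (RInt_periodic_shift (fun p => RInt (fun t => f t p) 0 PI)).
  - now apply continuous_RInt_angles_inner.
  - intro p. apply RInt_ext. intros t _. apply Hper.
Qed.

Lemma sphere_int_RInt_angles h :
  continuous2 (fun t p => h (sin t * cos p) (sin t * sin p) (cos t) * sin t) ->
  sphere_int h = RInt_angles (fun t p => h (sin t * cos p) (sin t * sin p) (cos t) * sin t).
Proof.
  intro Hh. unfold sphere_int, RInt_angles.
  exact (RInt_RInt_swap _ 0 PI 0 (2 * PI) Hh).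
Qed.

Definition polar_weight (nu1 nu2 t p : R) : R :=
  exp (- (nu1 * cos p ^ 2 + nu2 * sin p ^ 2) * sin t ^ 2).

Definition sph_I0 (nu1 nu2 : R) : R :=
  RInt_angles (fun t p => sin t * polar_weight nu1 nu2 t p).
Definition sph_Ix (nu1 nu2 : R) : R :=
  RInt_angles (fun t p => cos p ^ 2 * sin t ^ 3 * polar_weight nu1 nu2 t p).
Definition sph_Iy (nu1 nu2 : R) : R :=
  RInt_angles (fun t p => sin p ^ 2 * sin t ^ 3 * polar_weight nu1 nu2 t p).

Lemma polar_weight_periodic nu1 nu2 t p :
  polar_weight nu1 nu2 t (p + 2 * PI) = polar_weight nu1 nu2 t p.
Proof. unfold polar_weight. rewrite cos_plus, sin_plus, cos_2PI, sin_2PI. f_equal. ring. Qed.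

Lemma polar_weight_quarter_turn nu1 nu2 t p :
  polar_weight nu1 nu2 t (p + PI / 2) = polar_weight nu2 nu1 t p.
Proof.
  unfold polar_weight. rewrite cos_plus, sin_plus, cos_PI2, sin_PI2. f_equal. ring.
Qed.

Lemma sph_I0_swap nu1 nu2 : sph_I0 nu2 nu1 = sph_I0 nu1 nu2.
Proof.
  unfold sph_I0. rewrite <- (RInt_angles_shift _ (PI / 2)).
  - apply RInt_angles_ext. intros t p _. now rewrite polar_weight_quarter_turn.
  - unfold polar_weight; continuity2.
  - intros t p. now rewrite polar_weight_periodic.
Qed.

Lemma sph_Iy_swap nu1 nu2 : sph_Iy nu2 nu1 = sph_Ix nu1 nu2.
Proof.
  unfold sph_Iy, sph_Ix. rewrite <- (RInt_angles_shift _ (PI / 2)).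
  - apply RInt_angles_ext. intros t p _. rewrite polar_weight_quarter_turn.
    rewrite sin_plus, cos_PI2, sin_PI2. ring.
  - unfold polar_weight; continuity2.
  - intros t p. rewrite polar_weight_periodic, sin_plus, cos_2PI, sin_2PI. ring.
Qed.

Lemma continuous_RInt_polar (q : R -> R -> R) nu1 nu2 : continuous2 q ->
  forall p, continuous (fun p => RInt (fun t => q t p * polar_weight nu1 nu2 t p) 0 PI) p.
Proof.
  intro Hq. apply continuous_RInt_angles_inner. unfold polar_weight. continuity2; apply Hq.
Qed.

Lemma sph_I0_pos nu1 nu2 : 0 < sph_I0 nu1 nu2.
Proof.
  pose proof PI_RGT_0. unfold sph_I0, RInt_angles.
  apply RInt_gt_0; [lra| |].
  - intros p _. apply RInt_gt_0; [lra| |unfold polar_weight; continuity1].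
    intros t Ht. apply Rmult_lt_0_compat; [apply sin_gt_0; lra | apply exp_pos].
  - intros p _. apply (continuous_RInt_polar (fun t _ => sin t)). continuity2.
Qed.

Lemma RInt_colatitude_parts a :
  RInt (fun t => sin t * exp (- a * sin t ^ 2) *
                 (2 - 3 * sin t ^ 2 - 2 * a * sin t ^ 2 * cos t ^ 2)) 0 PI = 0 :> R.
Proof.
  rewrite (RInt_antiderivative _ (fun t => sin t ^ 2 * cos t * exp (- a * sin t ^ 2))).
  - rewrite sin_0, sin_PI. ring.
  - continuity1.
  - intro t. auto_derive; [exact I|].
    replace (sin t * (sin t * 1)) with (sin t ^ 2) by ring.
    apply Rminus_diag_uniq.
    transitivity (2 * sin t * exp (- a * sin t ^ 2) * (sin t ^ 2 + cos t ^ 2 - 1)); [ring|].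
    rewrite sin2_cos2_pow. ring.
Qed.

Lemma RInt_azimuth_parts nu1 nu2 s :
  RInt (fun p => s * exp (- (nu1 * cos p ^ 2 + nu2 * sin p ^ 2) * s ^ 2) * (cos p ^ 2 - sin p ^ 2)
         - 2 * (nu2 - nu1) * s ^ 3 * sin p ^ 2 * cos p ^ 2
             * exp (- (nu1 * cos p ^ 2 + nu2 * sin p ^ 2) * s ^ 2)) 0 (2 * PI) = 0 :> R.
Proof.
  rewrite (RInt_antiderivative _
             (fun p => s * sin p * cos p * exp (- (nu1 * cos p ^ 2 + nu2 * sin p ^ 2) * s ^ 2))).
  - rewrite sin_0, sin_2PI. ring.
  - continuity1.
  - intro p. auto_derive; [exact I|].
    replace (sin p * (sin p * 1)) with (sin p ^ 2) by ring.
    replace (cos p * (cos p * 1)) with (cos p ^ 2) by ring.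
    replace (s * (s * 1)) with (s ^ 2) by ring. ring.
Qed.

Lemma sph_I0_le_Iy nu1 nu2 : nu2 <= nu1 ->
  sph_I0 nu1 nu2 <= (3 + 2 * Rmax nu2 0) * sph_Iy nu1 nu2.
Proof.
  intro Hnu.
  (* [X] is the [I0] integrand minus [sin p ^ 2 * T] minus [P]; [T] and [P] integrate to zero. *)
  set (E := polar_weight nu1 nu2).
  set (T := fun t p => sin p ^ 2 * (sin t * E t p *
         (2 - 3 * sin t ^ 2 - 2 * (nu1 * cos p ^ 2 + nu2 * sin p ^ 2) * sin t ^ 2 * cos t ^ 2))).
  set (P := fun t p => sin t * E t p * (cos p ^ 2 - sin p ^ 2)
         - 2 * (nu2 - nu1) * sin t ^ 3 * sin p ^ 2 * cos p ^ 2 * E t p).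
  set (X := fun t p => sin p ^ 2 * sin t ^ 3 * E t p *
         (3 + 2 * nu2 * cos t ^ 2 - 2 * (nu1 - nu2) * cos p ^ 2 * sin t ^ 2)).
  assert (HT : RInt_angles T = 0).
  { apply RInt_angles_inner_zero. intro p. unfold T, E, polar_weight.
    rewrite (RInt_scal_R (fun t => _)) by (apply ex_RInt_continuous_R; continuity1).
    rewrite RInt_colatitude_parts. ring_R. }
  assert (HP : RInt_angles P = 0).
  { apply RInt_angles_outer_zero; [unfold P, E, polar_weight; continuity2|].
    intro t. apply RInt_azimuth_parts. }
  assert (Hsplit : sph_I0 nu1 nu2 = RInt_angles X + RInt_angles T + RInt_angles P).
  { rewrite <- !RInt_angles_plus by (unfold X, T, P, E, polar_weight; continuity2).
    apply RInt_angles_ext. intros t p _. unfold X, T, P, E.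
    generalize (polar_weight nu1 nu2 t p). intro w.
    pose proof (sin2_cos2_pow t). pose proof (sin2_cos2_pow p).
    replace (cos p ^ 2) with (1 - sin p ^ 2) by lra.
    replace (cos t ^ 2) with (1 - sin t ^ 2) by lra. ring. }
  rewrite Hsplit, HT, HP, !Rplus_0_r. unfold sph_Iy.
  rewrite <- RInt_angles_scal by (unfold polar_weight; continuity2).
  apply RInt_angles_le;
    [unfold X, E, polar_weight; continuity2 | unfold polar_weight; continuity2 |].
  intros t p Ht. unfold X. fold E.
  pose proof (sin2_cos2_pow t). pose proof (sin2_cos2_pow p).
  assert (Hfac : 0 <= sin p ^ 2 * sin t ^ 3 * E t p).
  { assert (0 <= sin t) by (apply sin_ge_0; lra).
    apply Rmult_le_pos; [apply Rmult_le_pos; [nra | now apply pow_le] | left; apply exp_pos]. }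
  assert (Hnu2 : nu2 * cos t ^ 2 <= Rmax nu2 0).
  { destruct (Rle_dec 0 nu2); [rewrite Rmax_left | rewrite Rmax_right]; nra. }
  assert (0 <= (nu1 - nu2) * cos p ^ 2 * sin t ^ 2) by (apply Rmult_le_pos; nra).
  apply Rle_trans with (sin p ^ 2 * sin t ^ 3 * E t p * (3 + 2 * Rmax nu2 0)).
  - apply Rmult_le_compat_l; lra.
  - right. unfold E. ring.
Qed.

Lemma sph_Iy_small_nu2_gt_4 nu1 nu2 : nu2 <= nu1 ->
  sph_Iy nu1 nu2 < / 11 * sph_I0 nu1 nu2 -> 4 < nu2.
Proof.
  intros Hnu Hy. pose proof (sph_I0_le_Iy nu1 nu2 Hnu) as Hle.
  pose proof (sph_I0_pos nu1 nu2) as Hpos. pose proof (Rmax_r nu2 0).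
  assert (Hm : 11 < 3 + 2 * Rmax nu2 0) by nra.
  destruct (Rle_dec 0 nu2); [rewrite Rmax_left in Hm | rewrite Rmax_right in Hm]; lra.
Qed.

Lemma nu_large_of_small_moments nu1 nu2 :
  sph_Ix nu1 nu2 < / 11 * sph_I0 nu1 nu2 -> sph_Iy nu1 nu2 < / 11 * sph_I0 nu1 nu2 ->
  4 <= nu1 /\ 4 <= nu2.
Proof.
  intros Hx Hy. destruct (Rle_dec nu2 nu1) as [Hnu|Hnu].
  - pose proof (sph_Iy_small_nu2_gt_4 nu1 nu2 Hnu Hy). lra.
  - rewrite <- sph_Iy_swap, <- sph_I0_swap in Hx.
    pose proof (sph_Iy_small_nu2_gt_4 nu2 nu1 ltac:(lra) Hx). lra.
Qed.

Lemma sph_I0_inner nu1 nu2 p :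
  RInt (fun t => sin t * polar_weight nu1 nu2 t p) 0 PI = Ksin1 (nu1 * cos p ^ 2 + nu2 * sin p ^ 2).
Proof. reflexivity. Qed.

Lemma sph_Ix_inner nu1 nu2 p :
  RInt (fun t => cos p ^ 2 * sin t ^ 3 * polar_weight nu1 nu2 t p) 0 PI
  = cos p ^ 2 * Ksin3 (nu1 * cos p ^ 2 + nu2 * sin p ^ 2).
Proof.
  unfold Ksin3, polar_weight. rewrite <- RInt_scal_R by (apply ex_RInt_continuous_R; continuity1).
  apply RInt_ext. intros t _. ring_R.
Qed.

Lemma sph_Iy_inner nu1 nu2 p :
  RInt (fun t => sin p ^ 2 * sin t ^ 3 * polar_weight nu1 nu2 t p) 0 PI
  = sin p ^ 2 * Ksin3 (nu1 * cos p ^ 2 + nu2 * sin p ^ 2).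
Proof.
  unfold Ksin3, polar_weight. rewrite <- RInt_scal_R by (apply ex_RInt_continuous_R; continuity1).
  apply RInt_ext. intros t _. ring_R.
Qed.

Lemma RInt_scal_le_continuous (f g : R -> R) k a b : a <= b ->
  (forall x, continuous f x) -> (forall x, continuous g x) ->
  (forall x, a <= x <= b -> k * f x <= g x) -> k * RInt f a b <= RInt g a b.
Proof.
  intros Hab Hf Hg Hfg. rewrite <- RInt_scal_R by now apply ex_RInt_continuous_R.
  apply RInt_le_continuous; auto. intro x. apply (continuous_scal_r k f), Hf.
Qed.

Lemma RInt_le_scal_continuous (f g : R -> R) k a b : a <= b ->
  (forall x, continuous f x) -> (forall x, continuous g x) ->
  (forall x, a <= x <= b -> g x <= k * f x) -> RInt g a b <= k * RInt f a b.
Proof.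
  intros Hab Hf Hg Hfg. rewrite <- RInt_scal_R by now apply ex_RInt_continuous_R.
  apply RInt_le_continuous; auto. intro x. apply (continuous_scal_r k f), Hf.
Qed.

Lemma Ksin3_weighted_bounds w a : 0 <= w -> 4 <= a ->
  4 / PI ^ 3 * (w / a ^ 2) <= w * Ksin3 a /\ w * Ksin3 a <= PI ^ 4 / 16 * (w / a ^ 2).
Proof.
  intros Hw Ha. destruct (Ksin3_bounds_large a Ha) as [Hlo Hup].
  split; unfold Rdiv in *; nra.
Qed.

Lemma sph_moment_bounds nu1 nu2 : 4 <= nu1 -> 4 <= nu2 ->
  let A := fun phi => nu1 * cos phi ^ 2 + nu2 * sin phi ^ 2 in
  let J0 := RInt (fun phi => / A phi) 0 (2 * PI) in
  let Jc := RInt (fun phi => cos phi ^ 2 / A phi ^ 2) 0 (2 * PI) in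
  let Js := RInt (fun phi => sin phi ^ 2 / A phi ^ 2) 0 (2 * PI) in
  1 / PI * J0 <= sph_I0 nu1 nu2 /\ sph_I0 nu1 nu2 <= PI ^ 2 / 4 * J0 /\
  4 / PI ^ 3 * Jc <= sph_Ix nu1 nu2 /\ sph_Ix nu1 nu2 <= PI ^ 4 / 16 * Jc /\
  4 / PI ^ 3 * Js <= sph_Iy nu1 nu2 /\ sph_Iy nu1 nu2 <= PI ^ 4 / 16 * Js.
Proof.
  intros H1 H2 A J0 Jc Js. pose proof PI_RGT_0.
  assert (HA : forall p, 4 <= A p).
  { intro p. pose proof (sin2_cos2_pow p). unfold A. nra. }
  assert (HA1 : forall p, continuous (fun phi => / A phi) p).
  { intro p. apply continuous_Rinv_comp; [unfold A; continuity1 | pose proof (HA p); lra]. }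
  assert (HA2 : forall g, (forall p, continuous g p) ->
            forall p, continuous (fun phi => g phi / A phi ^ 2) p).
  { intros g Hg p. apply (continuous_mult g (fun phi => / A phi ^ 2)); [apply Hg|].
    apply continuous_Rinv_comp; [unfold A; continuity1 | pose proof (HA p); nra]. }
  assert (Hcos := HA2 (fun phi => cos phi ^ 2) ltac:(continuity1)).
  assert (Hsin := HA2 (fun phi => sin phi ^ 2) ltac:(continuity1)).
  assert (HI0 := continuous_RInt_polar (fun t _ => sin t) nu1 nu2 ltac:(continuity2)).
  assert (HIx := continuous_RInt_polar (fun t p => cos p ^ 2 * sin t ^ 3) nu1 nu2
                   ltac:(continuity2)).
  assert (HIy := continuous_RInt_polar (fun t p => sin p ^ 2 * sin t ^ 3) nu1 nu2
                   ltac:(continuity2)).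
  unfold J0, Jc, Js, sph_I0, sph_Ix, sph_Iy, RInt_angles.
  repeat split.
  - apply RInt_scal_le_continuous; [lra | exact HA1 | exact HI0 |].
    intros p _. rewrite sph_I0_inner. apply (Ksin1_bounds_large _ (HA p)).
  - apply RInt_le_scal_continuous; [lra | exact HA1 | exact HI0 |].
    intros p _. rewrite sph_I0_inner. apply (Ksin1_bounds_large _ (HA p)).
  - apply RInt_scal_le_continuous; [lra | exact Hcos | exact HIx |].
    intros p _. rewrite sph_Ix_inner. apply Ksin3_weighted_bounds; [apply pow2_ge_0 | apply HA].
  - apply RInt_le_scal_continuous; [lra | exact Hcos | exact HIx |].
    intros p _. rewrite sph_Ix_inner. apply Ksin3_weighted_bounds; [apply pow2_ge_0 | apply HA].
  - apply RInt_scal_le_continuous; [lra | exact Hsin | exact HIy |].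
    intros p _. rewrite sph_Iy_inner. apply Ksin3_weighted_bounds; [apply pow2_ge_0 | apply HA].
  - apply RInt_le_scal_continuous; [lra | exact Hsin | exact HIy |].
    intros p _. rewrite sph_Iy_inner. apply Ksin3_weighted_bounds; [apply pow2_ge_0 | apply HA].
Qed.

Lemma sphere_int_gauss nu1 nu2 :
  sphere_int (fun x y z => exp (- nu1 * x ^ 2 - nu2 * y ^ 2)) = sph_I0 nu1 nu2 /\
  sphere_int (fun x y z => x ^ 2 * exp (- nu1 * x ^ 2 - nu2 * y ^ 2)) = sph_Ix nu1 nu2 /\
  sphere_int (fun x y z => y ^ 2 * exp (- nu1 * x ^ 2 - nu2 * y ^ 2)) = sph_Iy nu1 nu2.
Proof.
  assert (Hexp : forall t p, - nu1 * (sin t * cos p) ^ 2 - nu2 * (sin t * sin p) ^ 2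
                             = - (nu1 * cos p ^ 2 + nu2 * sin p ^ 2) * sin t ^ 2)
    by (intros; ring).
  unfold sph_I0, sph_Ix, sph_Iy, polar_weight.
  repeat split; rewrite sphere_int_RInt_angles by continuity2;
    apply RInt_angles_ext; intros t p _; rewrite Hexp; ring.
Qed.

Lemma bm_weight_polar mu1 mu2 mu3 t p : mu1 + mu2 + mu3 = 0 ->
  bm_weight mu1 mu2 mu3 (sin t * cos p) (sin t * sin p) (cos t)
  = exp mu3 * polar_weight (- (2 * mu1 + mu2)) (- (mu1 + 2 * mu2)) t p.
Proof.
  intro Hsum. unfold bm_weight, polar_weight. rewrite <- exp_plus. f_equal.
  pose proof (sin2_cos2_pow t). pose proof (sin2_cos2_pow p).
  replace mu3 with (- mu1 - mu2) by lra. rewrite !Rpow_mult_distr.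
  replace (cos t ^ 2) with (1 - sin t ^ 2) by lra.
  replace (cos p ^ 2) with (1 - sin p ^ 2) by lra. ring.
Qed.

Lemma bm_moments l1 l2 l3 mu1 mu2 mu3 : bm_multipliers l1 l2 l3 mu1 mu2 mu3 ->
  sph_Ix (- (2 * mu1 + mu2)) (- (mu1 + 2 * mu2))
    = (l1 + 1 / 3) * sph_I0 (- (2 * mu1 + mu2)) (- (mu1 + 2 * mu2)) /\
  sph_Iy (- (2 * mu1 + mu2)) (- (mu1 + 2 * mu2))
    = (l2 + 1 / 3) * sph_I0 (- (2 * mu1 + mu2)) (- (mu1 + 2 * mu2)).
Proof.
  intros (Hsum & Hx & Hy & _).
  set (nu1 := - (2 * mu1 + mu2)). set (nu2 := - (mu1 + 2 * mu2)).
  assert (HZ : bm_Z mu1 mu2 mu3 = exp mu3 * sph_I0 nu1 nu2).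
  { unfold bm_Z, sph_I0. rewrite <- RInt_angles_scal by (unfold polar_weight; continuity2).
    rewrite sphere_int_RInt_angles by (unfold bm_weight; continuity2).
    apply RInt_angles_ext. intros t p _.
    rewrite bm_weight_polar by exact Hsum. fold nu1 nu2. ring. }
  assert (HZx : sphere_int (fun x y z => x ^ 2 * bm_weight mu1 mu2 mu3 x y z)
                = exp mu3 * sph_Ix nu1 nu2).
  { unfold sph_Ix. rewrite <- RInt_angles_scal by (unfold polar_weight; continuity2).
    rewrite sphere_int_RInt_angles by (unfold bm_weight; continuity2).
    apply RInt_angles_ext. intros t p _.
    rewrite bm_weight_polar by exact Hsum. fold nu1 nu2. ring. }
  assert (HZy : sphere_int (fun x y z => y ^ 2 * bm_weight mu1 mu2 mu3 x y z)
                = exp mu3 * sph_Iy nu1 nu2).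
  { unfold sph_Iy. rewrite <- RInt_angles_scal by (unfold polar_weight; continuity2).
    rewrite sphere_int_RInt_angles by (unfold bm_weight; continuity2).
    apply RInt_angles_ext. intros t p _.
    rewrite bm_weight_polar by exact Hsum. fold nu1 nu2. ring. }
  rewrite HZ, HZx in Hx. rewrite HZ, HZy in Hy.
  pose proof (exp_pos mu3). pose proof (sph_I0_pos nu1 nu2).
  rewrite <- Hx, <- Hy. split; field; lra.
Qed.

Theorem lemma2p4 :
  exists delta0 : R, 0 < delta0 /\
  forall l1 l2 l3 mu1 mu2 mu3 : R,
    -(1/3) < l1 -> l1 <= l2 -> l2 <= l3 -> l3 < 2/3 ->
    l1 + l2 + l3 = 0 ->
    l2 + 1/3 < delta0 ->
    bm_multipliers l1 l2 l3 mu1 mu2 mu3 ->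
    let nu1 := - (2 * mu1 + mu2) in
    let nu2 := - (mu1 + 2 * mu2) in
    let A := fun phi => nu1 * (cos phi) ^ 2 + nu2 * (sin phi) ^ 2 in
    let I0 := sphere_int (fun x y z => exp (- nu1 * x ^ 2 - nu2 * y ^ 2)) in
    let Ix := sphere_int (fun x y z => x ^ 2 * exp (- nu1 * x ^ 2 - nu2 * y ^ 2)) in
    let Iy := sphere_int (fun x y z => y ^ 2 * exp (- nu1 * x ^ 2 - nu2 * y ^ 2)) in
    let J0 := RInt (fun phi => / A phi) 0 (2 * PI) in
    let Jc := RInt (fun phi => (cos phi) ^ 2 / (A phi) ^ 2) 0 (2 * PI) in
    let Js := RInt (fun phi => (sin phi) ^ 2 / (A phi) ^ 2) 0 (2 * PI) in
    (1 / PI) * J0 <= I0 /\ I0 <= (PI ^ 2 / 4) * J0 /\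
    (4 / PI ^ 3) * Jc <= Ix /\ Ix <= (PI ^ 4 / 16) * Jc /\
    (4 / PI ^ 3) * Js <= Iy /\ Iy <= (PI ^ 4 / 16) * Js.
Proof.
  exists (1 / 11). split; [lra|].
  intros l1 l2 l3 mu1 mu2 mu3 Hl1 H12 _ _ _ Hl2 Hmult nu1 nu2 A I0 Ix Iy J0 Jc Js.
  destruct (bm_moments _ _ _ _ _ _ Hmult) as [Hx Hy]. fold nu1 nu2 in Hx, Hy.
  pose proof (sph_I0_pos nu1 nu2).
  destruct (nu_large_of_small_moments nu1 nu2) as [H1 H2].
  - rewrite Hx. apply Rmult_lt_compat_r; lra.
  - rewrite Hy. apply Rmult_lt_compat_r; lra.
  - destruct (sphere_int_gauss nu1 nu2) as (E0 & Ex & Ey).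
    unfold I0, Ix, Iy. rewrite E0, Ex, Ey.
    exact (sph_moment_bounds nu1 nu2 H1 H2).
Qed.
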